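(* Let $q(\bar x)\,{:}{-}\,A\wedge C$ be a conjunctive query with comparisons. If $q_1$ and $q_2$ are both cores of $q$, then $q_1$ and $q_2$ are isomorphic via a bijection that is the identity on the variables $\bar x$.
   Context: Fix a dense linearly ordered domain $\Delta$ of constants; terms are constants or variables. A conjunctive query with comparisons (CQC) $q(\bar x)\,{:}{-}\,A\wedge C$ consists of distinguished variables $\bar x$, a finite set $A$ of relational atoms over terms, and a finite set $C$ of comparisons $s\,\rho\,t$, $\rho\in\{=,<,\le\}$. $C\models s\,\rho\,t$ means every assignment to $\Delta$ satisfying $C$ satisfies $s\,\rho\,t$. For CQCs $q_1(\bar x)\,{:}{-}\,A_1\wedge C_1$, $q_2(\bar x)\,{:}{-}\,A_2\wedge C_2$, a homomorphism $q_1\to_{\bar x}q_2$ is a map $h$ from terms of $q_1$ to terms of $q_2$, identity on constants and on $\bar x$, with $h(A_1)\subseteq A_2$ and $C_2\models h(r)\,\rho\,h(s)$ for all $r\,\rho\,s\in C_1$. An isomorphism is a bijection $h$ between variables, identity on constants (and on $\bar x$), with $h(A_1)=A_2$ and $h(C_1)=C_2$. The extension $\mathrm{ext}(q)$ replaces $C$ by $\{r\,\rho\,s: r,s\text{ terms of }q,\ C\models r\,\rho\,s\}$. A core of $q$ is a CQC $q'$ such that (1) $q\to_{\bar x}q'$; (2) for every CQC $q''$ with $q\to_{\bar x}q''$ and $q''\to_{\bar x}q$ there is an injective homomorphism $q'\to_{\bar x}q''$; (3) $q'=\mathrm{ext}(q')$. *)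

From HB Require Import structures.
From mathcomp Require Import all_boot all_order.
Set Implicit Arguments. Unset Strict Implicit. Unset Printing Implicit Defensive.
Import Order.TTheory.

Section CQC.
Context {disp : Order.disp_t} (D : orderType disp).

Inductive term := TVar of nat | TConst of D.

Definition term_to (t : term) : nat + D :=
  match t with TVar v => inl v | TConst c => inr c end.
Definition term_of (s : nat + D) : term :=
  match s with inl v => TVar v | inr c => TConst c end.
Lemma term_toK : cancel term_to term_of. Proof. by case. Qed.
HB.instance Definition _ := Equality.copy term (can_type term_toK).

Inductive cop := CEq | CLt | CLe.
Definition cop_to (o : cop) : nat := match o with CEq => 0 | CLt => 1 | CLe => 2 end.
Definition cop_of (n : nat) : option cop :=
  match n with 0 => Some CEq | 1 => Some CLt | 2 => Some CLe | _ => None end.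
Lemma cop_toK : pcancel cop_to cop_of. Proof. by case. Qed.
HB.instance Definition _ := Equality.copy cop (pcan_type cop_toK).

(* relational atom: relation symbol (a nat) applied to a list of terms *)
Definition atom := (nat * seq term)%type.
(* comparison  s rho t  encoded as ((s, rho), t) *)
Definition cmp := (term * cop * term)%type.

(* body of a CQC: the set A of atoms and the set C of comparisons (finite sets
   represented as sequences, compared extensionally). The distinguished
   variables x̄ are passed separately. *)
Record cqc := CQC { atoms : seq atom; comps : seq cmp }.

Definition eval (s : nat -> D) (t : term) : D :=
  match t with TVar v => s v | TConst c => c end.

Definition sat (s : nat -> D) (c : cmp) : bool :=
  let: (r, o, t) := c in
  match o with
  | CEq => eval s r == eval s t
  | CLt => (eval s r < eval s t)%O
  | CLe => (eval s r <= eval s t)%O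
  end.

Definition entails (C : seq cmp) (c : cmp) : Prop :=
  forall s : nat -> D, (forall c', c' \in C -> sat s c') -> sat s c.

Definition terms (x : seq nat) (q : cqc) : seq term :=
  [seq TVar v | v <- x] ++ flatten [seq a.2 | a <- atoms q]
  ++ flatten [seq [:: c.1.1; c.2] | c <- comps q].

Definition term_var (t : term) : option nat :=
  match t with TVar v => Some v | TConst _ => None end.

Definition vars (x : seq nat) (q : cqc) : seq nat := pmap term_var (terms x q).

Definition map_atom (h : term -> term) (a : atom) : atom := (a.1, map h a.2).
Definition map_cmp (h : term -> term) (c : cmp) : cmp :=
  let: (r, o, t) := c in (h r, o, h t).

Definition is_hom (x : seq nat) (q1 q2 : cqc) (h : term -> term) : Prop :=
  [/\ forall t, t \in terms x q1 -> h t \in terms x q2,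
      forall c : D, h (TConst c) = TConst c,
      forall v, v \in x -> h (TVar v) = TVar v,
      forall a, a \in atoms q1 -> map_atom h a \in atoms q2 &
      forall c, c \in comps q1 -> entails (comps q2) (map_cmp h c)].

Definition hom (x : seq nat) (q1 q2 : cqc) : Prop := exists h, is_hom x q1 q2 h.

Definition inj_hom (x : seq nat) (q1 q2 : cqc) : Prop :=
  exists h, is_hom x q1 q2 h /\ {in terms x q1 &, injective h}.

Definition is_ext (x : seq nat) (q : cqc) : Prop :=
  forall r o t, ((r, o, t) \in comps q) <->
    [/\ r \in terms x q, t \in terms x q & entails (comps q) (r, o, t)].

Definition is_core (x : seq nat) (q q' : cqc) : Prop :=
  [/\ hom x q q',
      forall q'', hom x q q'' -> hom x q'' q -> inj_hom x q' q'' &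
      is_ext x q'].

Definition lift_var (f : nat -> nat) (t : term) : term :=
  match t with TVar v => TVar (f v) | TConst c => TConst c end.

Definition iso (x : seq nat) (q1 q2 : cqc) : Prop :=
  exists f : nat -> nat,
  [/\ forall v, v \in vars x q1 -> f v \in vars x q2,
      {in vars x q1 &, injective f},
      forall w, w \in vars x q2 -> exists2 v, v \in vars x q1 & f v = w &
      forall v, v \in x -> f v = v] /\
  [seq map_atom (lift_var f) a | a <- atoms q1] =i atoms q2 /\
  [seq map_cmp (lift_var f) c | c <- comps q1] =i comps q2.

End CQC.

From HB Require Import structures.
From mathcomp Require Import all_boot all_order.
Set Implicit Arguments. Unset Strict Implicit. Unset Printing Implicit Defensive.

(* Two cores q1, q2 of q satisfy q -> q1 -> q and q -> q2 -> q, so by the core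
   property each maps injectively into the other.  An injective homomorphism
   is injective on atoms and, since the target equals its extension, sends
   comparisons to comparisons injectively.  Mutual injections between finite
   sets are bijections, so the injection q1 -> q2 is onto the terms, atoms and
   comparisons of q2; as it fixes constants it is a renaming of variables,
   i.e. an isomorphism. *)

Lemma inj_in_size_undup (T U : eqType) (g : T -> U) (s : seq T) (t : seq U) :
  {in s &, injective g} -> (forall a, a \in s -> g a \in t) ->
  size (undup s) <= size (undup t).
Proof.
move=> g_inj g_st; rewrite -(size_map g); apply: uniq_leq_size.
  by rewrite map_inj_in_uniq ?undup_uniq // => a b; rewrite !mem_undup; apply: g_inj.
by move=> y /mapP[a]; rewrite !mem_undup => /g_st ? ->.
Qed.

Lemma mem_map_inj_in_mutual (T U : eqType) (g : T -> U) (g' : U -> T)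
    (s : seq T) (t : seq U) :
  {in s &, injective g} -> (forall a, a \in s -> g a \in t) ->
  {in t &, injective g'} -> (forall b, b \in t -> g' b \in s) ->
  map g s =i t.
Proof.
move=> g_inj g_st g'_inj g'_ts.
have uniq_gs : uniq (map g (undup s)).
  by rewrite map_inj_in_uniq ?undup_uniq // => a b; rewrite !mem_undup; apply: g_inj.
have sub_gs : {subset map g (undup s) <= undup t}.
  by move=> y /mapP[a]; rewrite !mem_undup => /g_st ? ->.
have size_ts : size (undup t) <= size (map g (undup s)).
  by rewrite size_map; apply: inj_in_size_undup g'_inj g'_ts.
have [_ eq_gs] := uniq_min_size uniq_gs sub_gs size_ts.
by move=> b; rewrite -(eq_mem_map g (mem_undup s)) eq_gs mem_undup.
Qed.

Lemma inj_in_map_eq (T U : eqType) (f : T -> U) (P s1 s2 : seq T) :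
  {in P &, injective f} -> {subset s1 <= P} -> {subset s2 <= P} ->
  map f s1 = map f s2 -> s1 = s2.
Proof.
move=> f_inj; elim: s1 s2 => [|a s1 IH] [|b s2] //= sub1 sub2 [fab fs].
congr cons; first by apply: f_inj => //; [apply: sub1 | apply: sub2]; rewrite mem_head.
by apply: IH => // z zs; [apply: sub1 | apply: sub2]; rewrite inE zs orbT.
Qed.

Section Cores.
Context {disp : Order.disp_t} (D : orderType disp) (x : seq nat).
Implicit Types (q : cqc D) (h : term D -> term D).

Lemma mem_terms_atom q a t : a \in atoms q -> t \in a.2 -> t \in terms x q.
Proof.
move=> aq ta; rewrite /terms !mem_cat; apply/or3P; apply: Or32.
by apply/flatten_mapP; exists a.
Qed.

Lemma mem_terms_cmp q r o t :
  (r, o, t) \in comps q -> (r \in terms x q) && (t \in terms x q).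
Proof.
move=> cq; rewrite /terms !mem_cat.
have in_comps u : u \in [:: r; t] -> u \in flatten [seq [:: c.1.1; c.2] | c <- comps q].
  by move=> ut; apply/flatten_mapP; exists (r, o, t).
by rewrite !in_comps ?inE ?eqxx ?orbT.
Qed.

Lemma mem_vars q v : (v \in vars x q) = (TVar D v \in terms x q).
Proof.
rewrite /vars mem_pmap; apply/mapP/idP => [[[w|//] tq [->]] // | tq].
by exists (TVar D v).
Qed.

Lemma is_hom_id q : is_hom x q q id.
Proof.
split=> // [[n l] | [[r o] t] cq s sC]; first by rewrite /map_atom /= map_id.
exact: sC.
Qed.

Lemma core_inj_hom (q q1 q2 : cqc D) :
  is_core x q q1 -> is_core x q q2 -> inj_hom x q1 q2.
Proof.
have hom_qq : hom x q q by exists id; apply: is_hom_id.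
move=> [_ core1 _] [hom_q2 core2 _]; apply: core1 => //.
by have [h [hom_h _]] := core2 q hom_qq hom_qq; exists h.
Qed.

Lemma map_atom_inj_in (q1 : cqc D) h :
  {in terms x q1 &, injective h} -> {in atoms q1 &, injective (map_atom h)}.
Proof.
move=> h_inj [n1 l1] [n2 l2] a1 a2 [-> el]; congr pair.
by apply: (inj_in_map_eq h_inj) el => t;
  [apply: mem_terms_atom a1 | apply: mem_terms_atom a2].
Qed.

Lemma map_cmp_inj_in (q1 : cqc D) h :
  {in terms x q1 &, injective h} -> {in comps q1 &, injective (map_cmp h)}.
Proof.
move=> h_inj [[r o] t] [[r' o'] t'] c c' [er -> et].
have /andP[rq tq] := mem_terms_cmp c; have /andP[rq' tq'] := mem_terms_cmp c'.
by rewrite (h_inj _ _ rq rq' er) (h_inj _ _ tq tq' et).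
Qed.

Lemma map_cmp_ext (q1 q2 : cqc D) h : is_ext x q2 -> is_hom x q1 q2 h ->
  forall c, c \in comps q1 -> map_cmp h c \in comps q2.
Proof.
move=> ext2 [h_terms _ _ _ h_comps] [[r o] t] cq; apply/ext2.
have /andP[rq tq] := mem_terms_cmp cq.
by split; [apply: h_terms | apply: h_terms | exact: (h_comps _ cq)].
Qed.

Lemma hom_mem_terms_const (q1 q2 : cqc D) c :
  hom x q2 q1 -> TConst c \in terms x q2 -> TConst c \in terms x q1.
Proof. by move=> [h [h_terms h_const _ _ _]] /h_terms; rewrite h_const. Qed.

Definition var_part h (v : nat) : nat :=
  if h (TVar D v) is TVar w then w else v.

(* An injective [h] cannot send a variable to a constant [c]: [c] would then
   occur in [q2], hence in [q1] via the reverse homomorphism, and would collide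
   with its own image [h c = c]. *)
Lemma lift_var_part (q1 q2 : cqc D) h :
  is_hom x q1 q2 h -> {in terms x q1 &, injective h} -> hom x q2 q1 ->
  {in terms x q1, lift_var (var_part h) =1 h}.
Proof.
move=> [h_terms h_const _ _ _] h_inj hom21 [v|c] tq /=; last by rewrite h_const.
rewrite /var_part; case E: (h (TVar D v)) => [//|c].
have cq1 : TConst c \in terms x q1 by rewrite (hom_mem_terms_const hom21) // -E h_terms.
by have := h_inj _ _ tq cq1; rewrite E h_const => /(_ erefl).
Qed.

Lemma mutual_inj_hom_iso (q1 q2 : cqc D) :
  is_ext x q1 -> is_ext x q2 -> inj_hom x q1 q2 -> inj_hom x q2 q1 -> iso x q1 q2.
Proof.
move=> ext1 ext2 [h1 [hom1 inj1]] [h2 [hom2 inj2]].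
have hf := lift_var_part hom1 inj1 (ex_intro _ h2 hom2).
case: (hom1) => terms1 const1 fix1 atoms1 _.
case: (hom2) => terms2 _ _ atoms2 _.
have onto_terms := mem_map_inj_in_mutual inj1 terms1 inj2 terms2.
pose f := var_part h1.
have hfv v : v \in vars x q1 -> TVar D (f v) = h1 (TVar D v).
  by rewrite mem_vars => /hf.
exists f; split; [split | split].
- by move=> v vq; rewrite mem_vars hfv // terms1 // -mem_vars.
- move=> v v' vq vq' fv; have := hfv v' vq'; rewrite -fv hfv //.
  by move/inj1; rewrite -!mem_vars => /(_ vq vq') [].
- move=> w; rewrite mem_vars -onto_terms => /mapP[[v|c] tq hv].
    by exists v; rewrite ?mem_vars //; move: (hf _ tq); rewrite -hv => -[].
  by rewrite const1 in hv.
- by move=> v vx; rewrite /f /var_part fix1.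
- have -> : map (map_atom (lift_var f)) (atoms q1) = map (map_atom h1) (atoms q1).
    apply/eq_in_map => [[n l]] aq; congr pair; apply/eq_in_map => t tl.
    by apply: hf; apply: mem_terms_atom aq tl.
  exact: mem_map_inj_in_mutual (map_atom_inj_in inj1) atoms1
         (map_atom_inj_in inj2) atoms2.
- have -> : map (map_cmp (lift_var f)) (comps q1) = map (map_cmp h1) (comps q1).
    apply/eq_in_map => [[[r o] t]] cq /=.
    by have /andP[rq tq] := mem_terms_cmp cq; rewrite !hf.
  exact: mem_map_inj_in_mutual (map_cmp_inj_in inj1) (map_cmp_ext ext2 hom1)
         (map_cmp_inj_in inj2) (map_cmp_ext ext1 hom2).
Qed.

End Cores.

Theorem mainTheorem2 (disp : Order.disp_t) (D : orderType disp)
  (dense : forall a b : D, (a < b)%O -> exists c : D, (a < c)%O && (c < b)%O)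
  (x : seq nat) (q q1 q2 : cqc D) :
  is_core x q q1 -> is_core x q q2 -> iso x q1 q2.
Proof.
move=> core1 core2; have [_ _ ext1] := core1; have [_ _ ext2] := core2.
apply: mutual_inj_hom_iso => //; [exact: core_inj_hom core1 core2 |
                                  exact: core_inj_hom core2 core1].
Qed.
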